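(* Under the standing assumptions, writing (R1) for the condition $\mathscr{R}(A^*AB)=\mathscr{R}(B)$, the following hold. (33) $\{M^{(1,2,3)}\}\subseteq\{C^{-1}B^{(1)}A^{-1}\}$; and $\{M^{(1,2,3)}\}\supseteq\{C^{-1}B^{(1)}A^{-1}\}\Leftrightarrow\{M^{(1,2,3)}\}=\{C^{-1}B^{(1)}A^{-1}\}\Leftrightarrow r(B)=m$. (34) $\{M^{(1,2,3)}\}\subseteq\{C^{-1}B^{(1,2)}A^{-1}\}$; and $\{M^{(1,2,3)}\}\supseteq\{C^{-1}B^{(1,2)}A^{-1}\}\Leftrightarrow\{M^{(1,2,3)}\}=\{C^{-1}B^{(1,2)}A^{-1}\}\Leftrightarrow B=0$ or $r(B)=m$. (35) $\{M^{(1,2,3)}\}\cap\{C^{-1}B^{(1,3)}A^{-1}\}\neq\emptyset\Leftrightarrow\{M^{(1,2,3)}\}\subseteq\{C^{-1}B^{(1,3)}A^{-1}\}\Leftrightarrow$ (R1); and $\{M^{(1,2,3)}\}\supseteq\{C^{-1}B^{(1,3)}A^{-1}\}\Leftrightarrow\{M^{(1,2,3)}\}=\{C^{-1}B^{(1,3)}A^{-1}\}\Leftrightarrow$ (R1) and $r(B)=\min\{m,n\}$. (36) $\{M^{(1,2,3)}\}\cap\{C^{-1}B^{(1,4)}A^{-1}\}\neq\emptyset$; $\{M^{(1,2,3)}\}\supseteq\{C^{-1}B^{(1,4)}A^{-1}\}\Leftrightarrow r(B)=m$; $\{M^{(1,2,3)}\}\subseteq\{C^{-1}B^{(1,4)}A^{-1}\}\Leftrightarrow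 B=0$ or $r(B)=n$; $\{M^{(1,2,3)}\}=\{C^{-1}B^{(1,4)}A^{-1}\}\Leftrightarrow r(B)=m=n$. (37) $\{M^{(1,2,3)}\}\cap\{C^{-1}B^{(1,2,3)}A^{-1}\}\neq\emptyset\Leftrightarrow\{M^{(1,2,3)}\}=\{C^{-1}B^{(1,2,3)}A^{-1}\}\Leftrightarrow$ (R1). (38) $\{M^{(1,2,3)}\}\cap\{C^{-1}B^{(1,2,4)}A^{-1}\}\neq\emptyset$; $\{M^{(1,2,3)}\}\supseteq\{C^{-1}B^{(1,2,4)}A^{-1}\}\Leftrightarrow B=0$ or $r(B)=m$; $\{M^{(1,2,3)}\}\subseteq\{C^{-1}B^{(1,2,4)}A^{-1}\}\Leftrightarrow B=0$ or $r(B)=n$; $\{M^{(1,2,3)}\}=\{C^{-1}B^{(1,2,4)}A^{-1}\}\Leftrightarrow B=0$ or $r(B)=m=n$. (39) $\{M^{(1,2,3)}\}\cap\{C^{-1}B^{(1,3,4)}A^{-1}\}\neq\emptyset\Leftrightarrow$ (R1); $\{M^{(1,2,3)}\}\supseteq\{C^{-1}B^{(1,3,4)}A^{-1}\}\Leftrightarrow$ (R1) and $r(B)=\min\{m,n\}$; $\{M^{(1,2,3)}\}\subseteq\{C^{-1}B^{(1,3,4)}A^{-1}\}\Leftrightarrow B=0$ or ((R1) and $r(B)=n$); $\{M^{(1,2,3)}\}=\{C^{-1}B^{(1,3,4)}A^{-1}\}\Leftrightarrow$ (R1) and $r(B)=n$. (40) $C^{-1}B^\dagger A^{-1}\in\{M^{(1,2,3)}\}\Leftrightarrow$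 (R1).
   Context: Standing assumptions: $m,n\ge1$; $A\in\mathbb{C}^{m\times m}$ and $C\in\mathbb{C}^{n\times n}$ are nonsingular; $B\in\mathbb{C}^{m\times n}$; $M=ABC$. For a complex matrix $X$, $X^*$ is its conjugate transpose, $r(X)$ its rank and $\mathscr{R}(X)$ its column space. For $X\in\mathbb{C}^{p\times q}$, a matrix $G\in\mathbb{C}^{q\times p}$ is called an $\{i,\ldots,j\}$-generalized inverse of $X$ (written $X^{(i,\ldots,j)}$) if it satisfies the equations numbered $i,\ldots,j$ among the four Penrose equations (i) $XGX=X$, (ii) $GXG=G$, (iii) $(XG)^*=XG$, (iv) $(GX)^*=GX$; $\{X^{(i,\ldots,j)}\}$ denotes the set of all such $G$. The Moore–Penrose inverse $X^\dagger$ is the unique matrix satisfying all four equations. For a type $(k,\ldots,l)$, $\{C^{-1}B^{(k,\ldots,l)}A^{-1}\}:=\{C^{-1}GA^{-1}: G\in\{B^{(k,\ldots,l)}\}\}$. *)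

From HB Require Import structures.
From mathcomp Require Import all_boot all_order all_algebra.
Set Implicit Arguments. Unset Strict Implicit. Unset Printing Implicit Defensive.
Import Order.TTheory GRing.Theory Num.Theory.
Local Open Scope ring_scope.

(* The complex field C is generalised to an arbitrary
   numClosedFieldType R (e.g. algC), with complex conjugation Num.conj. *)

Definition ctmx (R : numClosedFieldType) p q (X : 'M[R]_(p, q)) : 'M[R]_(q, p) :=
  (map_mx Num.conj X)^T.

Definition penrose (R : numClosedFieldType) p q (i : nat)
    (X : 'M[R]_(p, q)) (G : 'M[R]_(q, p)) : Prop :=
  match i with
  | 1%N => X *m G *m X = X
  | 2%N => G *m X *m G = G
  | 3%N => ctmx (X *m G) = X *m G
  | 4%N => ctmx (G *m X) = G *m X
  | _ => True
  end.

Definition ginv (R : numClosedFieldType) p q (idx : seq nat)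
    (X : 'M[R]_(p, q)) (G : 'M[R]_(q, p)) : Prop :=
  forall i, i \in idx -> penrose i X G.

Definition tginv (R : numClosedFieldType) m n (idx : seq nat)
    (A : 'M[R]_m) (B : 'M[R]_(m, n)) (C : 'M[R]_n) (G : 'M[R]_(n, m)) : Prop :=
  exists G0, ginv idx B G0 /\ G = invmx C *m G0 *m invmx A.

Definition msubset T (P Q : T -> Prop) : Prop := forall x, P x -> Q x.
Definition mseteq T (P Q : T -> Prop) : Prop := forall x, P x <-> Q x.
Definition mmeets T (P Q : T -> Prop) : Prop := exists x, P x /\ Q x.

(* column space equality R(X) = R(Y), via row spaces of transposes *)
Definition colspace_eq (R : fieldType) m p q (X : 'M[R]_(m, p)) (Y : 'M[R]_(m, q)) : Prop :=
  (X^T == Y^T)%MS.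

From HB Require Import structures.
From mathcomp Require Import all_boot all_order all_algebra zify.
Set Implicit Arguments. Unset Strict Implicit. Unset Printing Implicit Defensive.
Import Order.TTheory GRing.Theory Num.Theory.
Local Open Scope ring_scope.

(* With N := A^* A and X := C G A, G is a {1,2,3}-inverse of M = A B C exactly when
   B X B = B, X B X = X and N B X is hermitian, i.e. X is a {1,2,3}-inverse of B for the
   inner product <u, v> = (A u)^* (A v); and G lies in C^-1 B^(i..j) A^-1 exactly when
   X lies in B^(i..j).  So everything compares this class W of weighted inverses with the
   classes B^(i..j).  Positivity of N makes B X the same for all X in W, just as B X is
   the orthogonal projector B B^+ for every {1,3}-inverse; hence W meets or sits inside
   B^(1,3) iff N commutes with B B^+, which is the range condition R(N B) = R(B).  W is
   never empty: it contains (A B)^+ A, which is moreover a {1,2,4}-inverse of B.  Every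
   failure of an inclusion is detected by an affine family X0 + P V Q (V arbitrary) inside
   one class: it stays in the other class only if P = 0 or Q = 0, which reads B = 0 or
   B of full row or column rank. *)

Lemma mulmx_sandwich_eq0 (F : idomainType) p q r s (P : 'M[F]_(p, q)) (Q : 'M[F]_(r, s)) :
  (forall W, P *m W *m Q = 0) -> P = 0 \/ Q = 0.
Proof.
move=> PWQ0; have [[i j] /= Pij|P0] := pickP (fun ij : 'I_p * 'I_q => P ij.1 ij.2 != 0).
  right; apply/matrixP=> k l; rewrite mxE; apply/eqP; apply: contraT => Qkl.
  have := congr1 (fun Z : 'M[F]_(p, s) => Z i l) (PWQ0 (delta_mx j k)).
  rewrite -(mul_delta_mx (0 : 'I_1)) mulmxA -colE -mulmxA -rowE mxE big_ord1 !mxE.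
  by move/eqP; rewrite mulf_eq0 (negPf Pij) (negPf Qkl).
by left; apply/matrixP=> i j; have := P0 (i, j); rewrite /= mxE => /negbFE/eqP.
Qed.

Section ConjugateTranspose.
Variable R : numClosedFieldType.

Lemma ctmxM p q r (X : 'M[R]_(p, q)) (Y : 'M[R]_(q, r)) :
  ctmx (X *m Y) = ctmx Y *m ctmx X.
Proof. by rewrite /ctmx map_mxM trmx_mul. Qed.

Lemma ctmxD p q (X Y : 'M[R]_(p, q)) : ctmx (X + Y) = ctmx X + ctmx Y.
Proof. by rewrite /ctmx map_mxD linearD. Qed.

Lemma ctmxZ p q a (X : 'M[R]_(p, q)) : ctmx (a *: X) = a^* *: ctmx X.
Proof. by rewrite /ctmx map_mxZ linearZ. Qed.

Lemma ctmxK p q (X : 'M[R]_(p, q)) : ctmx (ctmx X) = X.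
Proof. by apply/matrixP=> i j; rewrite !mxE conjCK. Qed.

Lemma ctmx0 p q : ctmx (0 : 'M[R]_(p, q)) = 0.
Proof. by rewrite /ctmx map_mx0 trmx0. Qed.

Lemma ctmx1 p : ctmx (1%:M : 'M[R]_p) = 1%:M.
Proof. by rewrite /ctmx map_mx1 trmx1. Qed.

Lemma ctmx_invmx p (X : 'M[R]_p) : ctmx (invmx X) = invmx (ctmx X).
Proof. by rewrite /ctmx map_invmx trmx_inv. Qed.

Lemma mxrank_ctmx p q (X : 'M[R]_(p, q)) : \rank (ctmx X) = \rank X.
Proof. by rewrite mxrank_tr mxrank_map. Qed.

(* Locked, so that rewriting with [mulmxA] cannot unfold it into a product. *)
Definition gram p q (X : 'M[R]_(p, q)) : 'M[R]_q := locked (ctmx X *m X).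

Lemma gramE p q (X : 'M[R]_(p, q)) : gram X = ctmx X *m X.
Proof. by rewrite /gram -lock. Qed.

Lemma gram_herm p q (X : 'M[R]_(p, q)) : ctmx (gram X) = gram X.
Proof. by rewrite gramE ctmxM ctmxK. Qed.

Lemma gram_eq0 p q (X : 'M[R]_(p, q)) : gram X = 0 -> X = 0.
Proof.
move=> X0; apply/matrixP=> i j; apply/eqP.
have /eqP := congr1 (fun Z : 'M[R]_q => Z j j) X0.
rewrite gramE !mxE psumr_eq0 => [/allP/(_ i (mem_index_enum _))/implyP/(_ isT)|k _].
  by rewrite !mxE mulrC -normCK sqrf_eq0 normr_eq0.
by rewrite !mxE mulrC -normCK exprn_ge0.
Qed.

Lemma gram_unit p q (X : 'M[R]_(p, q)) : row_full X -> gram X \in unitmx.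
Proof.
move=> fullX; rewrite -row_free_unit; apply: inj_row_free => v vX0.
have freeXt : row_free (ctmx X) by rewrite /row_free mxrank_ctmx.
apply: (row_free_inj freeXt); rewrite mul0mx.
have : gram (X *m ctmx v) = 0 by rewrite gramE ctmxM ctmxK !mulmxA -(mulmxA v) -gramE vX0 mul0mx.
by move/gram_eq0/(congr1 (@ctmx _ _ _)); rewrite ctmxM ctmxK ctmx0.
Qed.

Lemma herm_conjmx_gram p (U K : 'M[R]_p) : U \in unitmx ->
  ctmx (U *m K *m invmx U) = U *m K *m invmx U <-> ctmx (gram U *m K) = gram U *m K.
Proof.
move=> unitU; have unitUt : ctmx U \in unitmx by rewrite unitmx_tr map_unitmx.
rewrite [ctmx (gram U *m K)]ctmxM gram_herm !ctmxM gramE ctmx_invmx; split=> h.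
  have := congr1 (fun Z => ctmx U *m Z *m U) h.
  by rewrite !mulmxA mulmxKV // mulmxV // mul1mx -!mulmxA.
have := congr1 (fun Z => invmx (ctmx U) *m Z *m invmx U) h.
by rewrite !mulmxA mulmxK // mulVmx // mul1mx.
Qed.

(* Hermiticity at both V and 'i V forces P V Q = 0. *)
Lemma herm_affine_eq0 p q r (Z : 'M[R]_p) (P : 'M[R]_(p, q)) (Q : 'M[R]_(r, p)) :
  (forall V, ctmx (Z + P *m V *m Q) = Z + P *m V *m Q) -> P = 0 \/ Q = 0.
Proof.
move=> hermZ; apply: mulmx_sandwich_eq0 => V.
have := hermZ 0; rewrite mulmx0 mul0mx addr0 => hZ.
have herm W : ctmx (P *m W *m Q) = P *m W *m Q by have := hermZ W; rewrite ctmxD hZ => /addrI.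
have := herm ('i *: V); rewrite -scalemxAr -scalemxAl ctmxZ herm conjCi => /eqP.
rewrite -subr_eq0 -scalerBl scaler_eq0 -opprD oppr_eq0 -mulr2n mulrn_eq0 /=.
by rewrite (negPf (neq0Ci R)) => /eqP.
Qed.

End ConjugateTranspose.

Lemma eq_minn_or r m n : (r <= m)%N -> (r <= n)%N -> r = minn m n <-> r = m \/ r = n.
Proof. lia. Qed.

Section PredicateRelations.
Variable T : Type.
Implicit Types P Q : T -> Prop.

Lemma mseteqE P Q : mseteq P Q <-> msubset P Q /\ msubset Q P.
Proof. by split=> [PQ | [PQ QP] x]; [split=> x /PQ | split; [apply: PQ | apply: QP]]. Qed.

Lemma msubset_mseteq P Q : msubset P Q -> (msubset Q P <-> mseteq P Q).
Proof. by move=> PQ; rewrite mseteqE; split=> [|[]]. Qed.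

Variables (U : Type) (f : T -> U) (g : U -> T).
Hypothesis gK : cancel g f.
Variables (P Q : T -> Prop) (P' Q' : U -> Prop).
Hypotheses (PP' : forall x, P x <-> P' (f x)) (QQ' : forall x, Q x <-> Q' (f x)).

Lemma msubset_transport : msubset P Q <-> msubset P' Q'.
Proof.
split=> PQ y; last by rewrite PP' QQ'; apply: PQ.
by rewrite -(gK y) -PP' -QQ'; apply: PQ.
Qed.

Lemma mseteq_transport : mseteq P Q <-> mseteq P' Q'.
Proof.
split=> PQ y; last by rewrite PP' QQ'.
by rewrite -(gK y) -PP' -QQ'.
Qed.

Lemma mmeets_transport : mmeets P Q <-> mmeets P' Q'.
Proof.
split=> [[x [Px Qx]] | [y [P'y Q'y]]]; first by exists (f x); rewrite -PP' -QQ'.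
by exists (g y); rewrite PP' QQ' gK.
Qed.

End PredicateRelations.

Section GeneralizedInverses.
Variables (R : numClosedFieldType) (p q : nat).
Implicit Types (B : 'M[R]_(p, q)) (X : 'M[R]_(q, p)).

Lemma ginvE s B X : ginv s B X <-> foldr (fun i P => penrose i B X /\ P) True s.
Proof.
elim: s => [|i s IH]; first by split.
rewrite /= -IH; split=> [BX | [BXi BXs] j].
  by split=> [|j js]; apply: BX; rewrite inE ?eqxx // js orbT.
by rewrite inE => /orP[/eqP->|]; [exact: BXi | exact: BXs].
Qed.

Lemma ginv_sub s1 s2 B X : ginv s2 B X -> all (mem s2) s1 -> ginv s1 B X.
Proof. by move=> BX /allP s12 i /s12; apply: BX. Qed.

Lemma ginv_merge s1 s2 s B X : ginv s1 B X -> ginv s2 B X ->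
  all (fun i => (i \in s1) || (i \in s2)) s -> ginv s B X.
Proof. by move=> BX1 BX2 /allP s12 i /s12/orP[]; [apply: BX1 | apply: BX2]. Qed.

Lemma msubset_ginvl s1 s2 B (P : 'M[R]_(q, p) -> Prop) :
  msubset (ginv s1 B) P -> all (mem s2) s1 -> msubset (ginv s2 B) P.
Proof. by move=> s1P s12 X BX; apply/s1P/(ginv_sub BX). Qed.

Lemma msubset_ginvr s1 s2 B (P : 'M[R]_(q, p) -> Prop) :
  msubset P (ginv s2 B) -> all (mem s2) s1 -> msubset P (ginv s1 B).
Proof. by move=> Ps2 s12 X /Ps2/ginv_sub; apply. Qed.

Lemma ginv134_0 X : ginv [:: 1; 3; 4]%N (0 : 'M[R]_(p, q)) X.
Proof. by apply/ginvE; rewrite /= !mulmx0 !mul0mx !ctmx0. Qed.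

Lemma ginv1_rank_row B X : B *m X *m B = B -> \rank B = p -> B *m X = 1%:M.
Proof.
move=> BXB rankB; have /row_freeP[B' BB'] : row_free B by rewrite /row_free rankB.
by rewrite -[B *m X]mulmx1 -BB' mulmxA BXB.
Qed.

Lemma ginv1_rank_col B X : B *m X *m B = B -> \rank B = q -> X *m B = 1%:M.
Proof.
move=> BXB rankB; have /row_fullP[B' B'B] : row_full B by rewrite /row_full rankB.
by rewrite -[X *m B]mul1mx -B'B -!mulmxA (mulmxA B) BXB.
Qed.

Lemma ginv13_mulmx_eq B X Y :
  ginv [:: 1; 3]%N B X -> ginv [:: 1; 3]%N B Y -> B *m X = B *m Y.
Proof.
move=> /ginvE[/= BXB [hermBX _]] /ginvE[/= BYB [hermBY _]].
by rewrite -{1}BYB -mulmxA -{1}hermBY -hermBX -ctmxM mulmxA BXB.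
Qed.

Lemma exists_mpinv B : exists D, ginv [:: 1; 2; 3; 4]%N B D.
Proof.
have := mulmx_base B; have := col_base_full B; have := row_base_free B.
move: (col_base B) (row_base B) => F G freeG fullF <-.
have unitV : gram F \in unitmx by apply/gram_unit.
have unitU : G *m ctmx G \in unitmx.
  by rewrite -[G in G *m _]ctmxK -gramE; apply/gram_unit; rewrite /row_full mxrank_ctmx.
set U := invmx (G *m ctmx G); set V := invmx (gram F).
have GU k (Y : 'M[R]_(k, \rank B)) : Y *m G *m ctmx G *m U = Y.
  by rewrite -!mulmxA (mulmxA G) mulmxV // mulmx1.
have VF k (Y : 'M[R]_(k, \rank B)) : Y *m V *m ctmx F *m F = Y.
  by rewrite -!mulmxA -gramE mulVmx // mulmx1.
have hermU : ctmx U = U by rewrite ctmx_invmx ctmxM ctmxK.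
have hermV : ctmx V = V by rewrite ctmx_invmx gram_herm.
exists (ctmx G *m U *m V *m ctmx F).
by apply/ginvE; rewrite /= !mulmxA !GU !VF !ctmxM !ctmxK hermU hermV !mulmxA.
Qed.

End GeneralizedInverses.

Lemma trmx_submxP (F : fieldType) p q r (X : 'M[F]_(p, q)) (Y : 'M[F]_(p, r)) :
  reflect (exists Z, X = Y *m Z) (X^T <= Y^T)%MS.
Proof.
apply: (iffP submxP) => [[Z XZ] | [Z ->]]; last by exists Z^T; rewrite trmx_mul.
by exists Z^T; rewrite -[X]trmxK XZ trmx_mul trmxK.
Qed.

Section WeightedInverse.
Variables (R : numClosedFieldType) (m n : nat) (A : 'M[R]_m) (B : 'M[R]_(m, n)).
Hypothesis unitA : A \in unitmx.

(* {1,2,3}-inverses of B for the inner product <u, v> = (A u)^* (A v). *)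
Definition wginv (X : 'M[R]_(n, m)) : Prop :=
  [/\ B *m X *m B = B, X *m B *m X = X & ctmx (gram A *m (B *m X)) = gram A *m (B *m X)].

Lemma unit_gram : gram A \in unitmx.
Proof. by apply: gram_unit; rewrite row_full_unit. Qed.

Lemma wginv12 X : wginv X -> ginv [:: 1; 2]%N B X.
Proof. by case=> BXB XBX _; apply/ginvE. Qed.

Lemma wginv_mulmx_eq X Y : wginv X -> wginv Y -> B *m X = B *m Y.
Proof.
move=> [BXB _ hermX] [BYB _ hermY].
have NX : ctmx (B *m X) *m gram A = gram A *m (B *m X) by rewrite -hermX [RHS]ctmxM gram_herm.
have NY : ctmx (B *m Y) *m gram A = gram A *m (B *m Y) by rewrite -hermY [RHS]ctmxM gram_herm.
have XY : B *m X *m (B *m Y) = B *m Y by rewrite mulmxA BXB.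
have YX : B *m Y *m (B *m X) = B *m X by rewrite mulmxA BYB.
apply: (can_inj (mulKmx unit_gram)); apply/esym.
rewrite -XY (mulmxA (gram A) (B *m X)) -NX -(mulmxA (ctmx (B *m X))) -NY.
by rewrite (mulmxA (ctmx (B *m X))) -ctmxM YX.
Qed.

Lemma exists_wginv_ginv124 : exists2 X, wginv X & ginv [:: 1; 2; 4]%N B X.
Proof.
have [E /ginvE[/= ABEAB [EABE [hermABE [hermEAB _]]]]] := exists_mpinv (A *m B).
rewrite !mulmxA in ABEAB EABE hermEAB.
have BEAB : B *m (E *m A) *m B = B.
  by apply: (can_inj (mulKmx unitA)); rewrite !mulmxA.
have EABEA : E *m A *m B *m (E *m A) = E *m A by rewrite !mulmxA EABE.
exists (E *m A); last by apply/ginvE.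
split=> //; have -> : gram A *m (B *m (E *m A)) = ctmx A *m (A *m B *m E) *m A.
  by rewrite gramE !mulmxA.
by rewrite 2!ctmxM hermABE ctmxK mulmxA.
Qed.

Lemma rank_row_wginv X : \rank B = m -> ginv [:: 1]%N B X -> wginv X.
Proof.
move=> rankB /ginvE[/= BXB _]; have BX1 := ginv1_rank_row BXB rankB.
by split=> //; [rewrite -mulmxA BX1 mulmx1 | rewrite BX1 mulmx1 gram_herm].
Qed.

Lemma wginv0 X : B = 0 -> ginv [:: 2]%N B X -> wginv X.
Proof.
by move=> B0 /ginvE[/= XBX _]; split; rewrite // B0 ?mul0mx ?mulmx0 ?ctmx0.
Qed.

Lemma wginv_ginv14 X : B = 0 \/ \rank B = n -> wginv X -> ginv [:: 1; 4]%N B X.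
Proof.
case=> [B0 _ | rankB [BXB _ _]]; first by rewrite B0; apply: ginv_sub (ginv134_0 X) _.
by apply/ginvE; rewrite /= (ginv1_rank_col BXB rankB) ctmx1.
Qed.

Lemma colspace_eq_wginv D : ginv [:: 1; 2; 3; 4]%N B D ->
  colspace_eq (ctmx A *m A *m B) B <-> wginv D.
Proof.
rewrite -gramE => /ginvE[/= BDB [DBD [hermBD _]]].
split=> [/andP[/trmx_submxP[Z NBZ] _] | [_ _ hermNP]].
  have PNP : B *m D *m (gram A *m (B *m D)) = gram A *m (B *m D).
    by rewrite (mulmxA (gram A)) NBZ !mulmxA BDB.
  by split=> //; rewrite -{1}PNP ctmxM [ctmx (gram A *m _)]ctmxM hermBD gram_herm -mulmxA PNP.
have NP : gram A *m (B *m D) = B *m D *m gram A by rewrite -hermNP ctmxM hermBD gram_herm.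
apply/andP; split; apply/trmx_submxP.
  by exists (D *m gram A *m B); rewrite !mulmxA -NP -(mulmxA (gram A)) BDB.
exists (D *m invmx (gram A) *m B).
by rewrite !mulmxA -(mulmxA (gram A) B D) NP mulmxK ?unit_gram // BDB.
Qed.

Lemma wginv_sub_ginv14 : msubset wginv (ginv [:: 1; 4]%N B) -> B = 0 \/ \rank B = n.
Proof.
move=> sub14; have [E [BEB EBE hermE] _] := exists_wginv_ginv124.
have BQ0 : B *m (1%:M - E *m B) = 0 by rewrite mulmxBr mulmx1 mulmxA BEB subrr.
pose X V := E + (1%:M - E *m B) *m V *m (B *m E).
have BX V : B *m X V = B *m E by rewrite /X mulmxDr !mulmxA BQ0 !mul0mx addr0.
have XB V : X V *m B = E *m B + (1%:M - E *m B) *m V *m B.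
  by rewrite /X (mulmxDl E) -(mulmxA _ (B *m E)) BEB.
have wX V : wginv (X V).
  split; [by rewrite BX | | by rewrite BX].
  by rewrite -mulmxA BX /X (mulmxDl E) mulmxA EBE -(mulmxA _ (B *m E)) (mulmxA (B *m E)) BEB.
case: (herm_affine_eq0 (Z := E *m B) (P := 1%:M - E *m B) (Q := B)) => [V | IEB0 | ->].
- by have /ginvE[/= _ [hermXB _]] := sub14 _ (wX V); rewrite -XB.
- by right; apply/eqP/row_fullP; exists E; apply/esym/subr0_eq.
- by left.
Qed.

Variable D : 'M[R]_(n, m).
Hypothesis mpD : ginv [:: 1; 2; 3; 4]%N B D.

Lemma mpinv_ginv13 : ginv [:: 1; 3]%N B D.
Proof. exact: ginv_sub mpD _. Qed.

Lemma wginv_ginv_mpinv s X : all (mem s) [:: 1; 3]%N -> wginv X -> ginv s B X -> wginv D.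
Proof.
move=> s13 [_ _ hermX] /ginv_sub/(_ s13) X13; have /ginvE[/= BDB [DBD _]] := mpD.
by split=> //; rewrite -(ginv13_mulmx_eq X13 mpinv_ginv13).
Qed.

Lemma wginv_mpinv_ginv123 : wginv D -> mseteq wginv (ginv [:: 1; 2; 3]%N B).
Proof.
move=> wD X; have /ginvE[/= _ [_ [hermBD _]]] := mpD; split=> [wX | X123].
  have [BXB XBX _] := wX.
  by apply/ginvE; rewrite /= BXB XBX (wginv_mulmx_eq wX wD).
have /ginvE[/= BXB [XBX _]] := X123; have [_ _ hermD] := wD.
have X13 : ginv [:: 1; 3]%N B X by apply: ginv_sub X123 _.
by split; rewrite // (ginv13_mulmx_eq X13 mpinv_ginv13).
Qed.

Lemma wginv_mpinv_ginv13 X : wginv D -> \rank B = m \/ \rank B = n ->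
  ginv [:: 1; 3]%N B X -> wginv X.
Proof.
move=> [_ _ hermD] rankB X13; have /ginvE[/= BXB _] := X13.
split=> //; last by rewrite (ginv13_mulmx_eq X13 mpinv_ginv13).
case: rankB => rankB; first by rewrite -mulmxA (ginv1_rank_row BXB rankB) mulmx1.
by rewrite (ginv1_rank_col BXB rankB) mul1mx.
Qed.

Lemma ginv124_sub_wginv : msubset (ginv [:: 1; 2; 4]%N B) wginv -> B = 0 \/ \rank B = m.
Proof.
move=> sub124; have /ginvE[/= BDB [DBD [_ [hermDB _]]]] := mpD.
have PB0 : (1%:M - B *m D) *m B = 0 by rewrite mulmxBl mul1mx BDB subrr.
pose X Y := D + D *m B *m Y *m (1%:M - B *m D).
have BX Y : B *m X Y = B *m D + B *m Y *m (1%:M - B *m D).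
  by rewrite /X (mulmxDr B) !mulmxA BDB.
have XB Y : X Y *m B = D *m B.
  by rewrite /X (mulmxDl D) -(mulmxA _ (1%:M - _)) PB0 mulmx0 addr0.
have X124 Y : ginv [:: 1; 2; 4]%N B (X Y).
  apply/ginvE; rewrite /= XB hermDB; split; first by rewrite -mulmxA XB mulmxA BDB.
  by split=> //; rewrite /X (mulmxDr (D *m B)) DBD !mulmxA DBD.
case: (herm_affine_eq0 (Z := gram A *m (B *m D)) (P := gram A *m B) (Q := 1%:M - B *m D))
  => [V | NB0 | PD0].
- by have [_ _ +] := sub124 _ (X124 V); rewrite BX mulmxDr !mulmxA.
- by left; apply: (can_inj (mulKmx unit_gram)); rewrite NB0 mulmx0.
- by right; apply/eqP/row_freeP; exists D; apply/esym/subr0_eq.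
Qed.

Lemma ginv14_sub_wginv : (0 < n)%N -> msubset (ginv [:: 1; 4]%N B) wginv -> \rank B = m.
Proof.
move=> n_gt0 sub14.
have [B0|//] : B = 0 \/ \rank B = m.
  by apply: ginv124_sub_wginv => X X124; apply: sub14; apply: ginv_sub X124 _.
have [m0|m_gt0] := posnP m; first by have := rank_leq_row B; lia.
have X14 : ginv [:: 1; 4]%N B (const_mx 1) by rewrite B0; apply: ginv_sub (ginv134_0 _) _.
have [_ + _] := sub14 _ X14.
rewrite B0 mulmx0 mul0mx => /matrixP/(_ (Ordinal n_gt0) (Ordinal m_gt0)).
by rewrite !mxE => /eqP; rewrite eq_sym oner_eq0.
Qed.

Lemma ginv134_sub_wginv : msubset (ginv [:: 1; 3; 4]%N B) wginv -> \rank B = m \/ \rank B = n.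
Proof.
move=> sub134; have /ginvE[/= BDB [DBD [hermBD [hermDB _]]]] := mpD.
have PB0 : (1%:M - B *m D) *m B = 0 by rewrite mulmxBl mul1mx BDB subrr.
have BQ0 : B *m (1%:M - D *m B) = 0 by rewrite mulmxBr mulmx1 mulmxA BDB subrr.
have DBQ0 : D *m B *m (1%:M - D *m B) = 0 by rewrite mulmxBr mulmx1 mulmxA DBD subrr.
pose X W := D + (1%:M - D *m B) *m W *m (1%:M - B *m D).
have BX W : B *m X W = B *m D by rewrite /X (mulmxDr B) !mulmxA BQ0 !mul0mx addr0.
have XB W : X W *m B = D *m B.
  by rewrite /X (mulmxDl D) -(mulmxA _ (1%:M - _)) PB0 mulmx0 addr0.
have X134 W : ginv [:: 1; 3; 4]%N B (X W) by apply/ginvE; rewrite /= !BX XB BDB.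
have QWP0 W : (1%:M - D *m B) *m W *m (1%:M - B *m D) = 0.
  have [_ + _] := sub134 _ (X134 W).
  rewrite XB /X (mulmxDr (D *m B)) DBD !mulmxA DBQ0 !mul0mx addr0.
  by rewrite -{1}[D]addr0 => /addrI/esym.
case: (mulmx_sandwich_eq0 QWP0) => /subr0_eq DB1.
  by right; apply/eqP/row_fullP; exists D.
by left; apply/eqP/row_freeP; exists D.
Qed.

Lemma mmeets_wginv_ginv s : all (mem s) [:: 1; 3]%N -> all (mem [:: 1; 2; 3; 4]%N) s ->
  mmeets wginv (ginv s B) <-> wginv D.
Proof.
move=> s13 s1234; split=> [[X [wX sX]] | wD]; last by exists D; split=> //; apply: ginv_sub mpD _.
exact: wginv_ginv_mpinv s13 wX sX.
Qed.

Lemma wginv_sub_ginv s : all (mem s) [:: 1; 3]%N -> all (mem [:: 1; 2; 3]%N) s ->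
  msubset wginv (ginv s B) <-> wginv D.
Proof.
move=> s13 s123; split=> [sub | wD X wX]; last first.
  by apply: ginv_sub (iffLR (wginv_mpinv_ginv123 wD X) wX) _.
have [E wE _] := exists_wginv_ginv124.
exact: wginv_ginv_mpinv s13 wE (sub E wE).
Qed.

Lemma ginv_sub_wginv s : all (mem s) [:: 1; 3]%N -> all (mem [:: 1; 3; 4]%N) s ->
  msubset (ginv s B) wginv <-> wginv D /\ (\rank B = m \/ \rank B = n).
Proof.
move=> s13 s134; split=> [sub | [wD rankB] X sX]; last first.
  by apply: wginv_mpinv_ginv13 wD rankB _; apply: ginv_sub sX _.
split; first by apply: sub; apply: (ginv_sub _ s134); apply: ginv_sub mpD _.
exact: ginv134_sub_wginv (msubset_ginvl sub _).
Qed.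

Lemma wginv_vs_ginv1 : (0 < n)%N ->
  msubset wginv (ginv [:: 1]%N B)
  /\ (msubset (ginv [:: 1]%N B) wginv <-> mseteq wginv (ginv [:: 1]%N B))
  /\ (mseteq wginv (ginv [:: 1]%N B) <-> \rank B = m).
Proof.
move=> n_gt0; have sub1 : msubset wginv (ginv [:: 1]%N B) by apply: msubset_ginvr wginv12 _.
rewrite -msubset_mseteq //; split=> //; split=> //; split=> [sup | rankB X].
  by apply: ginv14_sub_wginv n_gt0 (msubset_ginvl sup _).
exact: rank_row_wginv.
Qed.

Lemma wginv_vs_ginv12 :
  msubset wginv (ginv [:: 1; 2]%N B)
  /\ (msubset (ginv [:: 1; 2]%N B) wginv <-> mseteq wginv (ginv [:: 1; 2]%N B))
  /\ (mseteq wginv (ginv [:: 1; 2]%N B) <-> B = 0 \/ \rank B = m).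
Proof.
have sub12 : msubset wginv (ginv [:: 1; 2]%N B) by exact: wginv12.
rewrite -msubset_mseteq //; split=> //; split=> //; split=> [sup | [B0 | rankB] X X12].
- exact: ginv124_sub_wginv (msubset_ginvl sup _).
- by apply: wginv0 B0 _; apply: ginv_sub X12 _.
- by apply: rank_row_wginv rankB _; apply: ginv_sub X12 _.
Qed.

Lemma wginv_vs_ginv13 :
  (mmeets wginv (ginv [:: 1; 3]%N B) <-> msubset wginv (ginv [:: 1; 3]%N B))
  /\ (msubset wginv (ginv [:: 1; 3]%N B) <-> wginv D)
  /\ (msubset (ginv [:: 1; 3]%N B) wginv <-> mseteq wginv (ginv [:: 1; 3]%N B))
  /\ (mseteq wginv (ginv [:: 1; 3]%N B) <-> wginv D /\ \rank B = minn m n).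
Proof.
rewrite mseteqE mmeets_wginv_ginv // wginv_sub_ginv // ginv_sub_wginv //.
rewrite (eq_minn_or (rank_leq_row B) (rank_leq_col B)); tauto.
Qed.

Lemma wginv_vs_ginv14 : (0 < m)%N -> (0 < n)%N ->
  mmeets wginv (ginv [:: 1; 4]%N B)
  /\ (msubset (ginv [:: 1; 4]%N B) wginv <-> \rank B = m)
  /\ (msubset wginv (ginv [:: 1; 4]%N B) <-> B = 0 \/ \rank B = n)
  /\ (mseteq wginv (ginv [:: 1; 4]%N B) <-> \rank B = m /\ m = n).
Proof.
move=> m_gt0 n_gt0.
have sup : msubset (ginv [:: 1; 4]%N B) wginv <-> \rank B = m.
  split=> [/(ginv14_sub_wginv n_gt0) // | rankB X X14].
  by apply: rank_row_wginv rankB _; apply: ginv_sub X14 _.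
have sub : msubset wginv (ginv [:: 1; 4]%N B) <-> B = 0 \/ \rank B = n.
  by split=> [/wginv_sub_ginv14 | rankB X]; last exact: wginv_ginv14.
have [E wE E124] := exists_wginv_ginv124.
have B0m : B = 0 -> \rank B <> m by move=> ->; rewrite mxrank0; lia.
have rankE : \rank B = m -> \rank B = n <-> m = n by move->.
rewrite mseteqE sup sub; split; last tauto.
by exists E; split=> //; apply: ginv_sub E124 _.
Qed.

Lemma wginv_vs_ginv123 :
  (mmeets wginv (ginv [:: 1; 2; 3]%N B) <-> mseteq wginv (ginv [:: 1; 2; 3]%N B))
  /\ (mseteq wginv (ginv [:: 1; 2; 3]%N B) <-> wginv D).
Proof.
have eqD : mseteq wginv (ginv [:: 1; 2; 3]%N B) <-> wginv D.
  split=> [/mseteqE[sub _] | ]; last exact: wginv_mpinv_ginv123.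
  by move: sub; rewrite wginv_sub_ginv.
by rewrite eqD mmeets_wginv_ginv.
Qed.

Lemma wginv_vs_ginv124 :
  mmeets wginv (ginv [:: 1; 2; 4]%N B)
  /\ (msubset (ginv [:: 1; 2; 4]%N B) wginv <-> B = 0 \/ \rank B = m)
  /\ (msubset wginv (ginv [:: 1; 2; 4]%N B) <-> B = 0 \/ \rank B = n)
  /\ (mseteq wginv (ginv [:: 1; 2; 4]%N B) <-> B = 0 \/ (\rank B = m /\ m = n)).
Proof.
have sup : msubset (ginv [:: 1; 2; 4]%N B) wginv <-> B = 0 \/ \rank B = m.
  split=> [/ginv124_sub_wginv // | [B0 | rankB] X X124].
    by apply: wginv0 B0 _; apply: ginv_sub X124 _.
  by apply: rank_row_wginv rankB _; apply: ginv_sub X124 _.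
have sub : msubset wginv (ginv [:: 1; 2; 4]%N B) <-> B = 0 \/ \rank B = n.
  split=> [sub | rankB X wX]; first by apply: wginv_sub_ginv14; apply: msubset_ginvr sub _.
  by apply: ginv_merge (wginv12 wX) (wginv_ginv14 rankB wX) _.
have [E wE E124] := exists_wginv_ginv124.
have rankE : \rank B = m -> \rank B = n <-> m = n by move->.
rewrite mseteqE sup sub; split; [by exists E | tauto].
Qed.

Lemma wginv_vs_ginv134 : (0 < m)%N -> (0 < n)%N ->
  (mmeets wginv (ginv [:: 1; 3; 4]%N B) <-> wginv D)
  /\ (msubset (ginv [:: 1; 3; 4]%N B) wginv <-> wginv D /\ \rank B = minn m n)
  /\ (msubset wginv (ginv [:: 1; 3; 4]%N B) <-> B = 0 \/ (wginv D /\ \rank B = n))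
  /\ (mseteq wginv (ginv [:: 1; 3; 4]%N B) <-> wginv D /\ \rank B = n).
Proof.
move=> m_gt0 n_gt0.
have sub : msubset wginv (ginv [:: 1; 3; 4]%N B) <-> B = 0 \/ (wginv D /\ \rank B = n).
  split=> [sub | [B0 X _ | [wD rankB] X wX]].
  - have sub14 : msubset wginv (ginv [:: 1; 4]%N B) by apply: msubset_ginvr sub _.
    have sub13 : msubset wginv (ginv [:: 1; 3]%N B) by apply: msubset_ginvr sub _.
    case: (wginv_sub_ginv14 sub14) => [|rankB]; [by left | right; split=> //].
    by move: sub13; rewrite wginv_sub_ginv.
  - by rewrite B0; apply: ginv134_0.
  - have X123 := iffLR (wginv_mpinv_ginv123 wD X) wX.
    by apply: ginv_merge X123 (wginv_ginv14 (or_intror rankB) wX) _.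
have B0m : B = 0 -> \rank B <> m by move=> ->; rewrite mxrank0; lia.
have B0n : B = 0 -> \rank B <> n by move=> ->; rewrite mxrank0; lia.
rewrite mseteqE sub ginv_sub_wginv // mmeets_wginv_ginv //.
rewrite (eq_minn_or (rank_leq_row B) (rank_leq_col B)); tauto.
Qed.

End WeightedInverse.

Lemma mulmx_sandwich_inj (F : comUnitRingType) m n (U : 'M[F]_m) (V : 'M[F]_n)
    (Y Z : 'M[F]_(m, n)) :
  U \in unitmx -> V \in unitmx -> U *m Y *m V = U *m Z *m V <-> Y = Z.
Proof.
move=> unitU unitV; split=> [|-> //] /(congr1 (mulmx^~ (invmx V))).
by rewrite !mulmxK // => /(congr1 (mulmx (invmx U))); rewrite !mulKmx.
Qed.

Section Reduction.
Variables (R : numClosedFieldType) (m n : nat).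
Variables (A : 'M[R]_m) (B : 'M[R]_(m, n)) (C : 'M[R]_n).
Hypotheses (unitA : A \in unitmx) (unitC : C \in unitmx).

Lemma tginvE idx G : tginv idx A B C G <-> ginv idx B (C *m G *m A).
Proof.
split=> [[G0 [BG0 ->]] | BG]; first by rewrite !mulmxA mulmxV // mul1mx mulmxKV.
by exists (C *m G *m A); split=> //; rewrite !mulmxA mulVmx // mul1mx mulmxK.
Qed.

Lemma ginv123_wginv G : ginv [:: 1; 2; 3]%N (A *m B *m C) G <-> wginv A B (C *m G *m A).
Proof.
set X := C *m G *m A.
have MG : A *m B *m C *m G = A *m (B *m X) *m invmx A by rewrite /X !mulmxA mulmxK.
have MGM : A *m B *m C *m G *m (A *m B *m C) = A *m (B *m X *m B) *m C.
  by rewrite /X !mulmxA.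
have GMG : G *m (A *m B *m C) *m G = invmx C *m (X *m B *m X) *m invmx A.
  by rewrite /X !mulmxA mulVmx // mul1mx mulmxK.
have GX : G = invmx C *m X *m invmx A by rewrite /X !mulmxA mulVmx // mul1mx mulmxK.
rewrite ginvE /= MGM GMG MG GX !mulmx_sandwich_inj ?unitmx_inv // herm_conjmx_gram //.
by split=> [[BXB [XBX [hermX _]]] | [BXB XBX hermX]].
Qed.

End Reduction.

Theorem theorem4p2 (R : numClosedFieldType) (m n : nat)
  (A : 'M[R]_m) (B : 'M[R]_(m, n)) (C : 'M[R]_n)
  (hm : (0 < m)%N) (hn : (0 < n)%N)
  (hA : A \in unitmx) (hC : C \in unitmx) :
  let M := A *m B *m C in
  let S123 := ginv [:: 1; 2; 3]%N M in
  let T idx := tginv idx A B C in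
  let R1 := colspace_eq (ctmx A *m A *m B) B in
  (* (33) *)
  (msubset S123 (T [:: 1]%N)
   /\ (msubset (T [:: 1]%N) S123 <-> mseteq S123 (T [:: 1]%N))
   /\ (mseteq S123 (T [:: 1]%N) <-> \rank B = m))
  (* (34) *)
  /\ (msubset S123 (T [:: 1; 2]%N)
   /\ (msubset (T [:: 1; 2]%N) S123 <-> mseteq S123 (T [:: 1; 2]%N))
   /\ (mseteq S123 (T [:: 1; 2]%N) <-> B = 0 \/ \rank B = m))
  (* (35) *)
  /\ ((mmeets S123 (T [:: 1; 3]%N) <-> msubset S123 (T [:: 1; 3]%N))
   /\ (msubset S123 (T [:: 1; 3]%N) <-> R1)
   /\ (msubset (T [:: 1; 3]%N) S123 <-> mseteq S123 (T [:: 1; 3]%N))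
   /\ (mseteq S123 (T [:: 1; 3]%N) <-> R1 /\ \rank B = minn m n))
  (* (36) *)
  /\ (mmeets S123 (T [:: 1; 4]%N)
   /\ (msubset (T [:: 1; 4]%N) S123 <-> \rank B = m)
   /\ (msubset S123 (T [:: 1; 4]%N) <-> B = 0 \/ \rank B = n)
   /\ (mseteq S123 (T [:: 1; 4]%N) <-> \rank B = m /\ m = n))
  (* (37) *)
  /\ ((mmeets S123 (T [:: 1; 2; 3]%N) <-> mseteq S123 (T [:: 1; 2; 3]%N))
   /\ (mseteq S123 (T [:: 1; 2; 3]%N) <-> R1))
  (* (38) *)
  /\ (mmeets S123 (T [:: 1; 2; 4]%N)
   /\ (msubset (T [:: 1; 2; 4]%N) S123 <-> B = 0 \/ \rank B = m)
   /\ (msubset S123 (T [:: 1; 2; 4]%N) <-> B = 0 \/ \rank B = n)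
   /\ (mseteq S123 (T [:: 1; 2; 4]%N) <-> B = 0 \/ (\rank B = m /\ m = n)))
  (* (39) *)
  /\ ((mmeets S123 (T [:: 1; 3; 4]%N) <-> R1)
   /\ (msubset (T [:: 1; 3; 4]%N) S123 <-> R1 /\ \rank B = minn m n)
   /\ (msubset S123 (T [:: 1; 3; 4]%N) <-> B = 0 \/ (R1 /\ \rank B = n))
   /\ (mseteq S123 (T [:: 1; 3; 4]%N) <-> R1 /\ \rank B = n))
  (* (40) *)
  /\ (forall Bd : 'M[R]_(n, m), ginv [:: 1; 2; 3; 4]%N B Bd ->
        (S123 (invmx C *m Bd *m invmx A) <-> R1)).
Proof.
move=> M S123 T R1.
have GK : cancel (fun X => invmx C *m X *m invmx A) (fun G => C *m G *m A).
  by move=> X; rewrite !mulmxA mulmxV // mul1mx mulmxKV.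
have S123E G : S123 G <-> wginv A B (C *m G *m A) := ginv123_wginv B hA hC G.
have TE idx G : T idx G <-> ginv idx B (C *m G *m A) := tginvE B hA hC idx G.
have subE idx := msubset_transport GK S123E (TE idx).
have supE idx := msubset_transport GK (TE idx) S123E.
have eqE idx := mseteq_transport GK S123E (TE idx).
have meetE idx := mmeets_transport GK S123E (TE idx).
have [D mpD] := exists_mpinv B.
have R1E : R1 <-> wginv A B D := colspace_eq_wginv hA mpD.
rewrite !subE !supE !eqE !meetE.
split; first exact (wginv_vs_ginv1 hA mpD hn).
split; first exact (wginv_vs_ginv12 hA mpD).
split; first by rewrite R1E; exact (wginv_vs_ginv13 hA mpD).
split; first exact (wginv_vs_ginv14 hA mpD hm hn).
split; first by rewrite R1E; exact (wginv_vs_ginv123 hA mpD).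
split; first exact (wginv_vs_ginv124 hA mpD).
split; first by rewrite R1E; exact (wginv_vs_ginv134 hA mpD hm hn).
by move=> Bd mpBd; rewrite S123E GK -(colspace_eq_wginv hA mpBd).
Qed.
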